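(* For any integers $k,\ell\ge2$ there is a bijective map $\lambda\mapsto(\vec\rho_\lambda,c_\lambda)$ from $(0,\infty)$ to the set of non-trivial solutions of the relaxed system described in the context. Moreover, each component of this map is an explicit real analytic function of $\lambda$.
   Context: Write $[x]_0=\max(0,x)$ and $[x]_a^b=\max(a,\min(b,x))$. For $c>0$ consider random variables $I_{A_C\to B},I_{B\to A_C}$ with values in $\{0,\dots,\ell-1\}$ and $I_{A_R\to B},I_{B\to A_R}$ with values in $\{0,1\}$; let superscripts $(j)$ denote independent copies and $X\sim\mathrm{Po}(kc)$ be independent of all of them. The system consists of the distributional equations (1) $I_{A_C\to B}\overset{d}{=}\ell-1-I_{B\to A_C}$; (2) $I_{A_R\to B}\overset{d}{=}[1-\sum_{j=1}^{k-1}I_{B\to A_R}^{(j)}]_0$; (3) $I_{B\to A_C}\overset{d}{=}[\ell-I_{A_C\to B}-\sum_{j=1}^{X}I_{A_R\to B}^{(j)}]_0^{\ell-1}$; (4) $I_{B\to A_R}\overset{d}{=}[\ell-I_{A_C\to B}^{(1)}-I_{A_C\to B}^{(2)}-\sum_{j=1}^{X}I_{A_R\to B}^{(j)}]_0^{1}$. The four distributions are encoded as a vector $\vec\rho$ of point probabilities. A solution of the relaxed system is a pair $(\vec\rho,c)$ with $c\in(0,\infty)$ such that the distributions described by $\vec\rho$ satisfy (1)–(4) with this $c$. A solution is trivial if $\Pr[I_{A_C\to B}=0]=\Pr[I_{A_R\to B}=0]=\Pr[I_{B\to A_C}=\ell-1]=\Pr[I_{B\to A_R}=1]=1$. *)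

From Stdlib Require Import Reals ZArith.
From Coquelicot Require Import Coquelicot.
Open Scope R_scope.

Fixpoint sumR (n : nat) (f : nat -> R) : R :=
  match n with
  | O => 0
  | S m => sumR m f + f m
  end.

Definition indZ (x y : Z) : R := if Z.eq_dec x y then 1 else 0.

(* [x]_a^b = max(a, min(b, x)) on integers *)
Definition clampZ (a b x : Z) : Z := Z.max a (Z.min b x).

Definition is_pmf (n : nat) (p : nat -> R) : Prop :=
  (forall i, 0 <= p i) /\ (forall i, (n <= i)%nat -> p i = 0) /\ sumR n p = 1.

(* law of the sum of m independent copies of a nat-valued variable with law p *)
Fixpoint conv_pow (p : nat -> R) (m : nat) : nat -> R :=
  match m with
  | O => fun s => match s with O => 1 | _ => 0 end
  | S m' => fun s => sumR (S s) (fun a => conv_pow p m' a * p (s - a)%nat)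
  end.

Definition poisson (mu : R) (n : nat) : R := exp (- mu) * mu ^ n / INR (fact n).

(* law of sum_{j=1}^X Y^(j), X ~ Po(mu) independent of the iid Y^(j) ~ p *)
Definition compound_poisson (mu : R) (p : nat -> R) (s : nat) : R :=
  Series (fun n => poisson mu n * conv_pow p n s).

(* The vector rho: point probabilities of the four distributions. *)
Record Dist4 := mkDist4 {
  pACB : nat -> R;  (* law of I_{A_C -> B}, values in {0..l-1} *)
  pBAC : nat -> R;  (* law of I_{B -> A_C}, values in {0..l-1} *)
  pARB : nat -> R;  (* law of I_{A_R -> B}, values in {0,1} *)
  pBAR : nat -> R   (* law of I_{B -> A_R}, values in {0,1} *)
}.

Definition relaxed_solution (k l : nat) (rho : Dist4) (c : R) : Prop :=
  0 < c /\
  is_pmf l (pACB rho) /\ is_pmf l (pBAC rho) /\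
  is_pmf 2 (pARB rho) /\ is_pmf 2 (pBAR rho) /\
  let S := compound_poisson (INR k * c) (pARB rho) in
  (* (1) I_{A_C->B} =d l-1-I_{B->A_C} *)
  (forall v : nat, pACB rho v =
     sumR l (fun b => pBAC rho b *
       indZ (Z.of_nat l - 1 - Z.of_nat b) (Z.of_nat v))) /\
  (* (2) I_{A_R->B} =d [1 - sum_{j=1}^{k-1} I_{B->A_R}^(j)]_0 *)
  (forall v : nat, pARB rho v =
     sumR k (fun t => conv_pow (pBAR rho) (k - 1) t *
       indZ (Z.max 0 (1 - Z.of_nat t)) (Z.of_nat v))) /\
  (* (3) I_{B->A_C} =d [l - I_{A_C->B} - sum_{j=1}^X I_{A_R->B}^(j)]_0^{l-1} *)
  (forall v : nat, pBAC rho v =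
     sumR l (fun a => pACB rho a *
       Series (fun s => S s *
         indZ (clampZ 0 (Z.of_nat l - 1) (Z.of_nat l - Z.of_nat a - Z.of_nat s))
              (Z.of_nat v)))) /\
  (* (4) I_{B->A_R} =d [l - I^(1)_{A_C->B} - I^(2)_{A_C->B} - sum_{j=1}^X I_{A_R->B}^(j)]_0^1 *)
  (forall v : nat, pBAR rho v =
     sumR l (fun a1 => sumR l (fun a2 => pACB rho a1 * pACB rho a2 *
       Series (fun s => S s *
         indZ (clampZ 0 1 (Z.of_nat l - Z.of_nat a1 - Z.of_nat a2 - Z.of_nat s))
              (Z.of_nat v))))).

Definition trivial_solution (l : nat) (rho : Dist4) : Prop :=
  pACB rho 0 = 1 /\ pARB rho 0 = 1 /\ pBAC rho (l - 1)%nat = 1 /\ pBAR rho 1 = 1.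

Definition analytic_on_pos (f : R -> R) : Prop :=
  forall x0, 0 < x0 -> exists (a : nat -> R) (r : R), 0 < r /\
    forall x, Rabs (x - x0) < r -> is_pseries a (x - x0) (f x).

From Stdlib Require Import Reals ZArith Lra Lia FunctionalExtensionality.
From Coquelicot Require Import Coquelicot.
Open Scope R_scope.

(* A solution forces [I_{A_R -> B}] to be Bernoulli, say with parameter [q], so by Poisson
   thinning the sums [sum_{j <= X} I_{A_R -> B}^(j)] in (3) and (4) are Poisson with parameter
   [lam = k c q].  Substituting (1) into (3) says that the law of [I_{A_C -> B}] is stationary
   for the chain [a |-> [a - 1 + X]_0^(l-1)] on [{0, ..., l-1}].  This chain steps down by at
   most one, and does so with probability [exp (- lam) > 0]; hence its stationary law is unique,
   given by a forward recursion, and nonnegative by flow balance across each cut.  Equations (4)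
   and (2) then determine the other laws, and [c = lam / (k q)]; [lam = 0] is exactly the trivial
   solution, while every [lam > 0] gives a non-trivial one from which [lam = k c q] is read off.
   Everything is built from [lam] and [exp (+- lam)] by ring operations and divisions by positive
   numbers, hence is analytic in [lam]. *)

(** * Finite sums *)

Lemma sumR_ext n f g : (forall i, (i < n)%nat -> f i = g i) -> sumR n f = sumR n g.
Proof.
  induction n as [|n IH]; intro H; cbn [sumR]; [reflexivity|].
  rewrite IH, H by (auto; lia). reflexivity.
Qed.

Lemma sumR_plus n f g : sumR n (fun i => f i + g i) = sumR n f + sumR n g.
Proof. induction n as [|n IH]; cbn [sumR]; [ring|]. rewrite IH. ring. Qed.

Lemma sumR_minus n f g : sumR n (fun i => f i - g i) = sumR n f - sumR n g.
Proof. induction n as [|n IH]; cbn [sumR]; [ring|]. rewrite IH. ring. Qed.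

Lemma sumR_scal_l n c f : sumR n (fun i => c * f i) = c * sumR n f.
Proof. induction n as [|n IH]; cbn [sumR]; [ring|]. rewrite IH. ring. Qed.

Lemma sumR_scal_r n c f : sumR n (fun i => f i * c) = sumR n f * c.
Proof. induction n as [|n IH]; cbn [sumR]; [ring|]. rewrite IH. ring. Qed.

Lemma sumR_eq0 n f : (forall i, (i < n)%nat -> f i = 0) -> sumR n f = 0.
Proof.
  intro H. rewrite (sumR_ext n f (fun _ => 0)) by exact H.
  induction n as [|n IH]; cbn [sumR]; [ring|]. rewrite IH; [ring|auto].
Qed.

Lemma sumR_swap n m f :
  sumR n (fun i => sumR m (fun j => f i j)) = sumR m (fun j => sumR n (fun i => f i j)).
Proof.
  induction n as [|n IH]; cbn [sumR].
  - now rewrite sumR_eq0.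
  - now rewrite IH, <- sumR_plus.
Qed.

Lemma sumR_ge0 n f : (forall i, (i < n)%nat -> 0 <= f i) -> 0 <= sumR n f.
Proof.
  induction n as [|n IH]; intro H; cbn [sumR]; [lra|].
  pose proof (H n (Nat.lt_succ_diag_r n)).
  enough (0 <= sumR n f) by lra. apply IH. intros; apply H; lia.
Qed.

Lemma sumR_trunc n m f : (m <= n)%nat -> (forall i, (m <= i < n)%nat -> f i = 0) ->
  sumR n f = sumR m f.
Proof.
  intros Hmn. induction Hmn as [|n Hmn IH]; intro H; [reflexivity|].
  cbn [sumR]. rewrite IH by (intros; apply H; lia). rewrite (H n) by lia. ring.
Qed.

Lemma sumR_le_trunc n m f : (m <= n)%nat -> (forall i, (i < n)%nat -> 0 <= f i) ->
  sumR m f <= sumR n f.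
Proof.
  intros Hmn. induction Hmn as [|n Hmn IH]; intro H; cbn [sumR]; [lra|].
  pose proof (H n (Nat.lt_succ_diag_r n)).
  enough (sumR m f <= sumR n f) by lra. apply IH. intros; apply H; lia.
Qed.

Lemma sumR_single n f j : (j < n)%nat -> (forall i, (i < n)%nat -> i <> j -> f i = 0) ->
  sumR n f = f j.
Proof.
  intros Hj H. rewrite (sumR_trunc n (S j) f) by (auto; intros; apply H; lia).
  cbn [sumR]. rewrite sumR_eq0; [ring|]. intros; apply H; lia.
Qed.

Lemma sumR_ge_term n f j : (forall i, (i < n)%nat -> 0 <= f i) -> (j < n)%nat ->
  f j <= sumR n f.
Proof.
  intros H Hj.
  pose proof (sumR_le_trunc n (S j) f Hj H). cbn [sumR] in *.
  enough (0 <= sumR j f) by lra. apply sumR_ge0. intros; apply H; lia.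
Qed.

Lemma sumR_Sl n f : sumR (S n) f = f O + sumR n (fun i => f (S i)).
Proof. induction n as [|n IH]; cbn [sumR] in *; [ring|]. rewrite IH. ring. Qed.

Lemma sumR_rev n f : sumR n (fun i => f (n - 1 - i)%nat) = sumR n f.
Proof.
  revert f. induction n as [|n IH]; intro f; [reflexivity|].
  rewrite (sumR_Sl n f), <- (IH (fun i => f (S i))). cbn [sumR].
  replace (S n - 1 - n)%nat with O by lia.
  rewrite (sumR_ext n _ (fun i => f (S (n - 1 - i)))) by (intros; f_equal; lia).
  ring.
Qed.

Lemma sumR_sum_f_R0 n f : sumR (S n) f = sum_f_R0 f n.
Proof. induction n as [|n IH]; cbn [sumR sum_f_R0] in *; [ring|]. now rewrite <- IH. Qed.

Lemma sumR_triangle_le n f c :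
  (forall i, (i < n)%nat -> Rabs (f i) <= c) -> Rabs (sumR n f) <= INR n * c.
Proof.
  induction n as [|n IH]; intro H; cbn [sumR].
  - rewrite Rabs_R0. simpl. lra.
  - rewrite S_INR. eapply Rle_trans; [apply Rabs_triang|].
    pose proof (H n (Nat.lt_succ_diag_r n)).
    enough (Rabs (sumR n f) <= INR n * c) by lra. apply IH. intros; apply H; lia.
Qed.

(** * Power series with geometric coefficient bounds *)

Lemma is_series_finite (a : nat -> R) (N : nat) l :
  (forall m, (N < m)%nat -> a m = 0) -> l = sum_f_R0 a N -> is_series a l.
Proof.
  intros H ->. apply is_series_Reals. intros eps Heps. exists N. intros n Hn.
  replace (sum_f_R0 a n) with (sum_f_R0 a N).
  - unfold R_dist. rewrite Rminus_eq_0, Rabs_R0. exact Heps.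
  - induction Hn as [|n Hn IH]; [reflexivity|]. cbn [sum_f_R0]. rewrite <- IH, H by lia. ring.
Qed.

(* The geometric bound makes the series converge absolutely, as Cauchy products require. *)
Definition analytic_at (f : R -> R) (x0 : R) : Prop :=
  exists (a : nat -> R) (M K : R), 0 < K /\ (forall n, Rabs (a n) <= M * K ^ n) /\
    forall x, Rabs (x - x0) * K < 1 -> is_pseries a (x - x0) (f x).

Lemma analytic_on_pos_of_at (f : R -> R) :
  (forall x0, 0 < x0 -> analytic_at f x0) -> analytic_on_pos f.
Proof.
  intros H x0 Hx0. destruct (H x0 Hx0) as (a & M & K & HK & _ & Hs).
  exists a, (/ K). split; [now apply Rinv_0_lt_compat|].
  intros x Hx. apply Hs.
  apply (Rmult_lt_compat_r K) in Hx; [|exact HK]. now rewrite Rinv_l in Hx by lra.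
Qed.

Lemma analytic_at_ext (f g : R -> R) (x0 : R) :
  (forall x, f x = g x) -> analytic_at f x0 -> analytic_at g x0.
Proof.
  intros E (a & M & K & HK & Hb & Hs). exists a, M, K. repeat split; auto.
  intros x Hx. rewrite <- E. now apply Hs.
Qed.

Lemma coef_bound_ge0 (a : nat -> R) (M K : R) :
  (forall n, Rabs (a n) <= M * K ^ n) -> 0 <= M.
Proof. intros H. specialize (H O). simpl in H. pose proof (Rabs_pos (a O)). lra. Qed.

Lemma ex_series_abs_of_coef_bound (a : nat -> R) (M K y : R) :
  0 < K -> (forall n, Rabs (a n) <= M * K ^ n) -> Rabs y * K < 1 ->
  ex_series (fun n => Rabs (a n * y ^ n)).
Proof.
  intros HK Hb Hy. pose proof (coef_bound_ge0 _ _ _ Hb) as HM.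
  apply (@ex_series_le R_AbsRing R_CompleteNormedModule _ (fun n => M * (K * Rabs y) ^ n)).
  - intro n. change norm with Rabs. rewrite Rabs_Rabsolu, Rabs_mult, <- RPow_abs.
    rewrite Rpow_mult_distr, <- Rmult_assoc.
    apply Rmult_le_compat_r; [apply pow_le, Rabs_pos|apply Hb].
  - apply (@ex_series_scal R_AbsRing R_NormedModule M (fun n => (K * Rabs y) ^ n)).
    apply ex_series_geom.
    rewrite Rabs_pos_eq by (apply Rmult_le_pos; [lra|apply Rabs_pos]). lra.
Qed.

Lemma pseries_center_value (f : R -> R) (x0 : R) (a : nat -> R) (K : R) :
  0 < K -> (forall x, Rabs (x - x0) * K < 1 -> is_pseries a (x - x0) (f x)) -> f x0 = a O.
Proof.
  intros HK Hs. assert (H := Hs x0). rewrite Rminus_eq_0, Rabs_R0, Rmult_0_l in H.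
  apply is_pseries_R, is_series_unique in H; [|exact Rlt_0_1]. rewrite <- H.
  apply is_series_unique, (is_series_finite _ 0); [|simpl; ring].
  intros [|m] Hm; [lia|simpl; ring].
Qed.

Lemma analytic_at_same_bound f g x0 : analytic_at f x0 -> analytic_at g x0 ->
  exists a b M K, 0 < K /\ (forall n, Rabs (a n) <= M * K ^ n /\ Rabs (b n) <= M * K ^ n) /\
    forall x, Rabs (x - x0) * K < 1 ->
      is_pseries a (x - x0) (f x) /\ is_pseries b (x - x0) (g x).
Proof.
  intros (a & M1 & K1 & HK1 & Hb1 & Hs1) (b & M2 & K2 & HK2 & Hb2 & Hs2).
  pose proof (coef_bound_ge0 _ _ _ Hb1). pose proof (coef_bound_ge0 _ _ _ Hb2).
  pose proof (Rmax_l M1 M2). pose proof (Rmax_r M1 M2).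
  pose proof (Rmax_l K1 K2). pose proof (Rmax_r K1 K2).
  exists a, b, (Rmax M1 M2), (Rmax K1 K2). split; [lra|]. split.
  - intro n. pose proof (pow_incr K1 (Rmax K1 K2) n ltac:(lra)).
    pose proof (pow_incr K2 (Rmax K1 K2) n ltac:(lra)).
    pose proof (pow_le K1 n ltac:(lra)). pose proof (pow_le K2 n ltac:(lra)).
    split; [eapply Rle_trans; [apply Hb1|]|eapply Rle_trans; [apply Hb2|]];
      apply Rmult_le_compat; lra.
  - intros x Hx. pose proof (Rabs_pos (x - x0)).
    split; [apply Hs1|apply Hs2]; nra.
Qed.

Lemma analytic_at_const (c x0 : R) : analytic_at (fun _ => c) x0.
Proof.
  exists (fun n => match n with O => c | _ => 0 end), (Rabs c), 1.
  split; [lra|]. split.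
  - intros [|n]; simpl; [lra|]. rewrite Rabs_R0, pow1. pose proof (Rabs_pos c). lra.
  - intros x _. apply is_pseries_R, (is_series_finite _ 0); [|simpl; ring].
    intros [|m] Hm; [lia|ring].
Qed.

Lemma analytic_at_id (x0 : R) : analytic_at (fun x => x) x0.
Proof.
  exists (fun n => match n with O => x0 | 1%nat => 1 | _ => 0 end), (Rabs x0 + 1), 1.
  split; [lra|]. split.
  - pose proof (Rabs_pos x0).
    intros [|[|n]]; simpl; rewrite ?Rabs_R0, ?Rabs_R1, ?pow1; lra.
  - intros x _. apply is_pseries_R, (is_series_finite _ 1); [|simpl; ring].
    intros [|[|m]] Hm; [lia|lia|ring].
Qed.

Lemma analytic_at_exp (c x0 : R) : analytic_at (fun x => exp (c * x)) x0.
Proof.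
  exists (fun n => exp (c * x0) * (c ^ n / INR (fact n))), (exp (c * x0)), (Rabs c + 1).
  pose proof (Rabs_pos c). pose proof (exp_pos (c * x0)). split; [lra|]. split.
  - intro n. rewrite Rabs_mult, (Rabs_pos_eq (exp _)) by lra.
    apply Rmult_le_compat_l; [lra|].
    pose proof (INR_fact_lt_0 n).
    assert (1 <= INR (fact n)) by (apply (le_INR 1), lt_O_fact).
    unfold Rdiv. rewrite Rabs_mult, <- RPow_abs, (Rabs_pos_eq (/ _))
      by (left; now apply Rinv_0_lt_compat).
    apply Rle_trans with (Rabs c ^ n * 1).
    + apply Rmult_le_compat_l; [apply pow_le; lra|].
      rewrite <- Rinv_1. apply Rinv_le_contravar; lra.
    + rewrite Rmult_1_r. apply pow_incr. lra.
  - intros x _. apply is_pseries_R.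
    replace (exp (c * x)) with (exp (c * x0) * exp (c * (x - x0)))
      by (rewrite <- exp_plus; f_equal; ring).
    pose proof (is_exp_Reals (c * (x - x0))) as He. apply is_pseries_R in He.
    apply (@is_series_scal R_AbsRing R_NormedModule (exp (c * x0))) in He.
    eapply is_series_ext; [|exact He]. intro n. cbv beta.
    unfold scal; simpl; unfold mult; simpl. rewrite Rpow_mult_distr. unfold Rdiv. ring.
Qed.

Lemma analytic_at_plus (f g : R -> R) (x0 : R) :
  analytic_at f x0 -> analytic_at g x0 -> analytic_at (fun x => f x + g x) x0.
Proof.
  intros Hf Hg. destruct (analytic_at_same_bound f g x0 Hf Hg) as (a & b & M & K & HK & Hb & Hs).
  exists (fun n => a n + b n), (2 * M), K. split; [exact HK|]. split.
  - intro n. destruct (Hb n). eapply Rle_trans; [apply Rabs_triang|]. lra.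
  - intros x Hx. destruct (Hs x Hx) as [Ha Hb'].
    apply is_pseries_R in Ha, Hb'. apply is_pseries_R.
    eapply is_series_ext; [|exact (is_series_plus _ _ _ _ Ha Hb')].
    intro n. cbv beta. unfold plus; simpl. ring.
Qed.

Lemma INR_S_le_pow2 n : INR (S n) <= 2 ^ n.
Proof.
  induction n as [|n IH]; [simpl; lra|]. rewrite S_INR. cbn [pow].
  assert (1 <= 2 ^ n) by (apply pow_R1_Rle; lra). lra.
Qed.

Lemma pow_split (x : R) i n : (i <= n)%nat -> x ^ n = x ^ i * x ^ (n - i).
Proof. intro H. rewrite <- pow_add. f_equal. lia. Qed.

Lemma analytic_at_mult (f g : R -> R) (x0 : R) :
  analytic_at f x0 -> analytic_at g x0 -> analytic_at (fun x => f x * g x) x0.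
Proof.
  intros Hf Hg. destruct (analytic_at_same_bound f g x0 Hf Hg) as (a & b & M & K & HK & Hb & Hs).
  pose proof (coef_bound_ge0 a M K (fun n => proj1 (Hb n))) as HM.
  exists (PS_mult a b), (M * M), (2 * K). split; [lra|]. split.
  - intro n. unfold PS_mult. rewrite <- sumR_sum_f_R0.
    eapply Rle_trans; [apply (sumR_triangle_le _ _ (M * M * K ^ n))|].
    + intros i Hi. rewrite Rabs_mult.
      replace (M * M * K ^ n) with ((M * K ^ i) * (M * K ^ (n - i)))
        by (rewrite (pow_split K i n) by lia; ring).
      apply Rmult_le_compat; try apply Rabs_pos; apply Hb.
    + assert (0 <= M * M * K ^ n) by (pose proof (pow_le K n ltac:(lra)); nra).
      replace (M * M * (2 * K) ^ n) with (2 ^ n * (M * M * K ^ n))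
        by (rewrite Rpow_mult_distr; ring).
      apply Rmult_le_compat_r; [lra|apply INR_S_le_pow2].
  - intros x Hx.
    assert (HxK : Rabs (x - x0) * K < 1) by (pose proof (Rabs_pos (x - x0)); nra).
    destruct (Hs x HxK) as [Ha Hb'].
    apply is_pseries_R in Ha, Hb'. apply is_pseries_R.
    pose proof (is_series_mult _ _ _ _ Ha Hb'
      (ex_series_abs_of_coef_bound _ M K _ HK (fun n => proj1 (Hb n)) HxK)
      (ex_series_abs_of_coef_bound _ M K _ HK (fun n => proj2 (Hb n)) HxK)) as Hab.
    eapply is_series_ext; [|exact Hab]. intro n. cbv beta. unfold PS_mult.
    rewrite Rmult_comm, scal_sum. apply sum_eq. intros i Hi.
    rewrite (pow_split (x - x0) i n) by lia. ring.
Qed.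

(* [cov_table x0 step n] lists the first [n + 1] values of the course-of-values recursion. *)
Fixpoint cov_table (x0 : R) (step : nat -> (nat -> R) -> R) (n : nat) : nat -> R :=
  match n with
  | O => fun _ => x0
  | S m => fun j => if (j <=? m)%nat then cov_table x0 step m j else step m (cov_table x0 step m)
  end.

Definition cov_rec x0 step (j : nat) : R := cov_table x0 step j j.

Lemma cov_table_spec x0 step n j : (j <= n)%nat -> cov_table x0 step n j = cov_rec x0 step j.
Proof.
  revert j. induction n as [|m IH]; intros j Hj.
  - now replace j with O by lia.
  - cbn [cov_table]. destruct (Nat.leb_spec j m); [apply IH; lia|].
    replace j with (S m) by lia. unfold cov_rec. cbn [cov_table].
    destruct (Nat.leb_spec (S m) m); [lia|reflexivity].
Qed.

Lemma cov_rec_S x0 step m :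
  (forall f g, (forall i, (i <= m)%nat -> f i = g i) -> step m f = step m g) ->
  cov_rec x0 step (S m) = step m (cov_rec x0 step).
Proof.
  intros Hs. unfold cov_rec at 1. cbn [cov_table].
  destruct (Nat.leb_spec (S m) m); [lia|].
  apply Hs. intros i Hi. now apply cov_table_spec.
Qed.

Definition pseries_inv (a : nat -> R) : nat -> R :=
  cov_rec (/ a O) (fun m b => - / a O * sum_f_R0 (fun i => a (S i) * b (m - i)%nat) m).

Lemma pseries_inv_S (a : nat -> R) m :
  pseries_inv a (S m) = - / a O * sum_f_R0 (fun i => a (S i) * pseries_inv a (m - i)%nat) m.
Proof.
  unfold pseries_inv. rewrite cov_rec_S; [reflexivity|].
  intros f g H. f_equal. apply sum_eq. intros i Hi. rewrite H by lia. reflexivity.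
Qed.

Lemma PS_mult_pseries_inv (a : nat -> R) n : a O <> 0 ->
  PS_mult a (pseries_inv a) n = match n with O => 1 | _ => 0 end.
Proof.
  intro Ha. unfold PS_mult. destruct n as [|m].
  - simpl. unfold pseries_inv, cov_rec. simpl. now field.
  - rewrite decomp_sum by lia. simpl pred.
    rewrite Nat.sub_0_r, pseries_inv_S. simpl (S m - S _)%nat. now field.
Qed.

Lemma geom_sum_le_half (t : R) n : 0 <= t <= 1/2 -> sum_f_R0 (fun i => t ^ (S i)) n <= 2 * t.
Proof.
  intros Ht.
  assert (E : sum_f_R0 (fun i => t ^ (S i)) n * (1 - t) = t - t ^ (S (S n))).
  { induction n as [|n IH]; cbn [sum_f_R0] in *; [simpl; ring|].
    rewrite Rmult_plus_distr_r, IH. simpl. ring. }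
  assert (0 <= t ^ (S (S n))) by (apply pow_le; lra).
  assert (0 <= sum_f_R0 (fun i => t ^ (S i)) n) by (apply cond_pos_sum; intro; apply pow_le; lra).
  nra.
Qed.

(* With [K = L t] and [t = |a 0| / (2 M) <= 1/2], the recursion step of a term
   bounded by [L ^ n / |a 0|] sums to a geometric series in [t]. *)
Lemma pseries_inv_bound (a : nat -> R) (M K : R) : a O <> 0 -> 0 < K ->
  (forall n, Rabs (a n) <= M * K ^ n) ->
  forall n, Rabs (pseries_inv a n) <= / Rabs (a O) * (2 * (M / Rabs (a O)) * K) ^ n.
Proof.
  intros Ha HK Hb. pose proof (Rabs_pos_lt _ Ha) as HA.
  assert (HM : Rabs (a O) <= M) by (specialize (Hb O); simpl in Hb; lra).
  set (A := Rabs (a O)) in *.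
  set (L := 2 * (M / A) * K). set (t := A / (2 * M)).
  assert (HKL : K = L * t) by (unfold L, t; field; lra).
  assert (Ht : 0 <= t <= 1/2).
  { unfold t. split; [apply Rdiv_le_0_compat; lra|].
    apply Rmult_le_reg_r with (2 * M); [lra|]. field_simplify; lra. }
  assert (HL : 0 < L)
    by (unfold L; apply Rmult_lt_0_compat; [apply Rmult_lt_0_compat, Rdiv_lt_0_compat|]; lra).
  assert (HAi : 0 < / A) by (now apply Rinv_0_lt_compat).
  induction n as [|n IH] using Nat.strong_induction_le.
  { unfold pseries_inv, cov_rec. simpl. unfold A. rewrite Rabs_inv. lra. }
  rewrite pseries_inv_S, Rabs_mult, Rabs_Ropp, Rabs_inv. fold A.
  apply Rmult_le_compat_l; [lra|].
  eapply Rle_trans; [apply sum_f_R0_triangle|].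
  apply Rle_trans with ((M * / A * L ^ (S n)) * sum_f_R0 (fun i => t ^ (S i)) n).
  - rewrite scal_sum. apply sum_Rle. intros i Hi. rewrite Rabs_mult.
    replace (t ^ S i * (M * / A * L ^ S n)) with ((M * K ^ (S i)) * (/ A * L ^ (n - i)))
      by (rewrite HKL, Rpow_mult_distr, (pow_split L (S i) (S n)) by lia;
          replace (S n - S i)%nat with (n - i)%nat by lia; ring).
    apply Rmult_le_compat; try apply Rabs_pos; [apply Hb|apply IH; lia].
  - assert (0 <= M * / A * L ^ S n)
      by (apply Rmult_le_pos; [apply Rmult_le_pos|apply pow_le]; lra).
    apply Rle_trans with ((M * / A * L ^ S n) * (2 * t)).
    + apply Rmult_le_compat_l; [lra|apply geom_sum_le_half, Ht].
    + right. unfold t. field. lra.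
Qed.

Lemma analytic_at_inv (g : R -> R) (x0 : R) :
  analytic_at g x0 -> g x0 <> 0 -> analytic_at (fun x => / g x) x0.
Proof.
  intros (a & M & K & HK & Hb & Hs) Hg.
  rewrite (pseries_center_value g x0 a K HK Hs) in Hg.
  pose proof (Rabs_pos_lt _ Hg) as HA.
  assert (HM : Rabs (a O) <= M) by (specialize (Hb O); simpl in Hb; lra).
  set (L := 2 * (M / Rabs (a O)) * K).
  assert (HKL : K <= L).
  { unfold L. enough (1 <= M / Rabs (a O)) by nra.
    apply Rmult_le_reg_r with (Rabs (a O)); [lra|]. field_simplify; lra. }
  pose proof (pseries_inv_bound a M K Hg HK Hb) as Hbi.
  exists (pseries_inv a), (/ Rabs (a O)), L. split; [lra|]. split; [exact Hbi|].
  intros x Hx. apply is_pseries_R.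
  assert (HxK : Rabs (x - x0) * K < 1) by (pose proof (Rabs_pos (x - x0)); nra).
  pose proof (Hs x HxK) as Hga. apply is_pseries_R in Hga.
  pose proof (ex_series_abs_of_coef_bound _ _ _ _ HK Hb HxK) as Ca.
  pose proof (ex_series_abs_of_coef_bound _ _ _ _ (Rlt_le_trans _ _ _ HK HKL) Hbi Hx) as Cb.
  pose proof (Series_correct _ (ex_series_Rabs _ Cb)) as Hbs.
  assert (Hprod : is_series (fun n => sum_f_R0 (fun i =>
      a i * (x - x0) ^ i * (pseries_inv a (n - i) * (x - x0) ^ (n - i))) n) 1).
  { apply (is_series_finite _ 0).
    - intros [|m] Hm; [lia|].
      transitivity (PS_mult a (pseries_inv a) (S m) * (x - x0) ^ (S m)).
      + unfold PS_mult. rewrite Rmult_comm, scal_sum. apply sum_eq. intros i Hi.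
        rewrite (pow_split (x - x0) i (S m)) by lia. ring.
      + rewrite PS_mult_pseries_inv by exact Hg. ring.
    - simpl. unfold pseries_inv, cov_rec. simpl. now field. }
  pose proof (is_series_unique _ _ (is_series_mult _ _ _ _ Hga Hbs Ca Cb)) as E.
  cbv beta in E. rewrite (is_series_unique _ _ Hprod) in E.
  assert (Hgx : g x <> 0) by (intro Z; rewrite Z in E; lra).
  replace (/ g x) with (Series (fun n => pseries_inv a n * (x - x0) ^ n)); [exact Hbs|].
  apply (Rmult_eq_reg_l (g x)); [|exact Hgx]. rewrite Rinv_r by exact Hgx. lra.
Qed.

Lemma analytic_at_minus (f g : R -> R) x0 :
  analytic_at f x0 -> analytic_at g x0 -> analytic_at (fun x => f x - g x) x0.
Proof.
  intros Hf Hg. apply (analytic_at_ext (fun x => f x + (-1) * g x)); [intro; ring|].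
  apply analytic_at_plus; [exact Hf|]. apply analytic_at_mult; [apply analytic_at_const|exact Hg].
Qed.

Lemma analytic_at_div (f g : R -> R) x0 :
  analytic_at f x0 -> analytic_at g x0 -> g x0 <> 0 -> analytic_at (fun x => f x / g x) x0.
Proof. intros Hf Hg Hn. apply analytic_at_mult; [exact Hf|]. now apply analytic_at_inv. Qed.

Lemma analytic_at_sumR (f : R -> nat -> R) n x0 :
  (forall i, (i < n)%nat -> analytic_at (fun x => f x i) x0) ->
  analytic_at (fun x => sumR n (f x)) x0.
Proof.
  induction n as [|n IH]; intro H; [exact (analytic_at_const 0 x0)|].
  apply (analytic_at_plus (fun x => sumR n (f x)) (fun x => f x n));
    [apply IH; intros; apply H; lia|apply H; lia].
Qed.

Lemma analytic_at_pow (g : R -> R) n x0 : analytic_at g x0 -> analytic_at (fun x => g x ^ n) x0.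
Proof.
  intro H. induction n as [|n IH]; [exact (analytic_at_const 1 x0)|].
  now apply (analytic_at_mult g (fun x => g x ^ n)).
Qed.

(** * Indicators, Poisson laws and Bernoulli thinning *)

Lemma indZ_eq x y : x = y -> indZ x y = 1.
Proof. intros ->. unfold indZ. now destruct (Z.eq_dec y y). Qed.

Lemma indZ_neq x y : x <> y -> indZ x y = 0.
Proof. intros H. unfold indZ. now destruct (Z.eq_dec x y). Qed.

Lemma indZ_ge0 x y : 0 <= indZ x y.
Proof. unfold indZ. destruct (Z.eq_dec x y); lra. Qed.

Lemma sumR_indZ n y : (0 <= y < Z.of_nat n)%Z -> sumR n (fun v => indZ y (Z.of_nat v)) = 1.
Proof.
  intro Hy. rewrite (sumR_single n _ (Z.to_nat y)) by (try lia; intros; apply indZ_neq; lia).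
  apply indZ_eq. lia.
Qed.

Lemma poisson_O lam : poisson lam O = exp (- lam).
Proof. unfold poisson. simpl. field. Qed.

Lemma poisson_ge0 lam s : 0 <= lam -> 0 <= poisson lam s.
Proof.
  intro H. unfold poisson. pose proof (exp_pos (- lam)). pose proof (pow_le lam s H).
  apply Rdiv_le_0_compat; [nra|apply INR_fact_lt_0].
Qed.

Lemma poisson_gt0 lam s : 0 < lam -> 0 < poisson lam s.
Proof.
  intro H. unfold poisson. pose proof (exp_pos (- lam)). pose proof (pow_lt lam s H).
  apply Rdiv_lt_0_compat; [nra|apply INR_fact_lt_0].
Qed.

Lemma poisson_at0 s : poisson 0 s = match s with O => 1 | _ => 0 end.
Proof.
  unfold poisson. rewrite Ropp_0, exp_0. destruct s; [simpl; field|].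
  rewrite pow_i by lia. unfold Rdiv. ring.
Qed.

Lemma is_series_poisson lam : is_series (poisson lam) 1.
Proof.
  pose proof (is_exp_Reals lam) as He. apply is_pseries_R in He.
  apply (@is_series_scal R_AbsRing R_NormedModule (exp (- lam))) in He.
  replace 1 with (exp (- lam) * exp lam) by (rewrite <- exp_plus, Rplus_opp_l; apply exp_0).
  eapply is_series_ext; [|exact He]. intro n. cbv beta.
  unfold poisson, scal; simpl; unfold mult; simpl. field. apply INR_fact_neq_0.
Qed.

Lemma sumR_poisson_le1 lam n : 0 <= lam -> sumR n (poisson lam) <= 1.
Proof.
  intro H. destruct n as [|n]; [simpl; lra|]. rewrite sumR_sum_f_R0.
  apply sum_incr; [|intro; now apply poisson_ge0].
  apply is_series_Reals, is_series_poisson.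
Qed.

Lemma sumR_poisson_at0 n g : (1 <= n)%nat -> sumR n (fun s => poisson 0 s * g s) = g O.
Proof.
  intro Hn. rewrite (sumR_single n _ O); [rewrite poisson_at0; ring|lia|].
  intros [|i] _ Hi; [lia|]. rewrite poisson_at0. ring.
Qed.

Lemma Series_poisson_eventually_const lam g N C : (forall s, (N <= s)%nat -> g s = C) ->
  Series (fun s => poisson lam s * g s)
  = sumR N (fun s => poisson lam s * g s) + C * (1 - sumR N (poisson lam)).
Proof.
  intro Hg. apply is_series_unique.
  set (d := fun s => poisson lam s * (g s - C)).
  assert (Hd : is_series d (sumR N d)).
  { apply (is_series_finite _ N).
    - intros m Hm. unfold d. rewrite Hg by lia. ring.
    - rewrite <- sumR_sum_f_R0. cbn [sumR]. unfold d at 3. rewrite Hg by lia. ring. }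
  pose proof (is_series_plus _ _ _ _
    (@is_series_scal R_AbsRing R_NormedModule C _ _ (is_series_poisson lam)) Hd) as H.
  replace (sumR N (fun s => poisson lam s * g s) + C * (1 - sumR N (poisson lam)))
    with (plus (scal C 1) (sumR N d)).
  - eapply is_series_ext; [|exact H]. intro n. cbv beta.
    unfold d, plus, scal; simpl; unfold mult; simpl. ring.
  - unfold d, plus, scal; simpl; unfold mult; simpl.
    rewrite (sumR_ext N _ (fun s => poisson lam s * g s - C * poisson lam s)) by (intros; ring).
    rewrite sumR_minus, sumR_scal_l. ring.
Qed.

Lemma analytic_at_poisson s x0 : analytic_at (fun x => poisson x s) x0.
Proof.
  apply (analytic_at_ext (fun x => exp ((-1) * x) * x ^ s * / INR (fact s))).
  { intro x. unfold poisson. now replace ((-1) * x) with (- x) by ring. }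
  apply analytic_at_mult; [apply analytic_at_mult|apply analytic_at_const].
  - apply analytic_at_exp.
  - apply analytic_at_pow, analytic_at_id.
Qed.

Lemma is_pmf2_split p : is_pmf 2 p -> p O = 1 - p 1%nat /\ (forall j, (2 <= j)%nat -> p j = 0).
Proof. intros (_ & Hp2 & Hsum). split; [|exact Hp2]. simpl in Hsum. lra. Qed.

Definition binR (n t : nat) : R := if (t <=? n)%nat then Binomial.C n t else 0.

Lemma conv_pow_bernoulli p x : p O = 1 - x -> p 1%nat = x -> (forall j, (2 <= j)%nat -> p j = 0) ->
  forall m t, conv_pow p m t = binR m t * x ^ t * (1 - x) ^ (m - t).
Proof.
  intros Hp0 Hp1 Hp2 m. induction m as [|m IH]; intros [|t].
  - unfold binR. simpl. rewrite C_n_n. ring.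
  - unfold binR. simpl. ring.
  - cbn [conv_pow sumR]. rewrite Nat.sub_0_r, IH, Hp0. unfold binR. cbn [Nat.leb].
    rewrite !C_n_0, !Nat.sub_0_r. simpl. ring.
  - cbn [conv_pow sumR].
    rewrite sumR_eq0 by (intros i Hi; rewrite Hp2 by lia; ring).
    replace (S t - t)%nat with 1%nat by lia. rewrite Nat.sub_diag, Hp1, Hp0, !IH.
    unfold binR.
    destruct (Nat.leb_spec t m), (Nat.leb_spec (S t) m), (Nat.leb_spec (S t) (S m)); try lia.
    + rewrite <- pascal by lia.
      simpl (S m - S t)%nat. replace (m - t)%nat with (S (m - S t)) by lia. simpl. ring.
    + replace t with m by lia. rewrite !C_n_n, !Nat.sub_diag. simpl. ring.
    + ring.
Qed.

Lemma sumR_conv_pow_bernoulli p x : p O = 1 - x -> p 1%nat = x ->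
  (forall j, (2 <= j)%nat -> p j = 0) -> forall m, sumR (S m) (conv_pow p m) = 1.
Proof.
  intros Hp0 Hp1 Hp2 m. rewrite sumR_sum_f_R0.
  rewrite (sum_eq _ (fun i => Binomial.C m i * x ^ i * (1 - x) ^ (m - i))).
  - rewrite <- binomial. replace (x + (1 - x)) with 1 by ring. apply pow1.
  - intros i Hi. rewrite (conv_pow_bernoulli p x Hp0 Hp1 Hp2). unfold binR.
    now destruct (Nat.leb_spec i m); [|lia].
Qed.

Lemma conv_pow_O p m : conv_pow p m O = p O ^ m.
Proof. induction m as [|m IH]; [reflexivity|]. cbn [conv_pow sumR]. rewrite IH. simpl. ring. Qed.

Lemma conv_pow_ge0 p : (forall j, 0 <= p j) -> forall m t, 0 <= conv_pow p m t.
Proof.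
  intros Hp m. induction m as [|m IH]; intro t.
  - destruct t; simpl; lra.
  - apply sumR_ge0. intros i _. now apply Rmult_le_pos.
Qed.

Lemma compound_poisson_bernoulli mu p : is_pmf 2 p ->
  compound_poisson mu p = poisson (mu * p 1%nat).
Proof.
  intro Hp. destruct (is_pmf2_split p Hp) as [Hp0 Hp2]. set (x := p 1%nat) in *.
  apply functional_extensionality. intro s.
  unfold compound_poisson. apply is_series_unique.
  set (a := fun n => poisson mu n * conv_pow p n s).
  assert (Ha : forall m, a (s + m)%nat =
     (exp (- mu) * (mu * x) ^ s / INR (fact s)) * ((mu * (1 - x)) ^ m / INR (fact m))).
  { intro m. unfold a. rewrite (conv_pow_bernoulli p x Hp0 eq_refl Hp2). unfold binR.
    destruct (Nat.leb_spec s (s + m)); [|lia].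
    unfold Binomial.C, poisson. replace (s + m - s)%nat with m by lia.
    rewrite !Rpow_mult_distr, pow_add. field.
    repeat split; apply INR_fact_neq_0. }
  assert (Hz : forall n, (n < s)%nat -> a n = 0).
  { intros n Hn. unfold a. rewrite (conv_pow_bernoulli p x Hp0 eq_refl Hp2). unfold binR.
    destruct (Nat.leb_spec s n); [lia|ring]. }
  assert (Hsh : is_series (fun m => a (s + m)%nat) (poisson (mu * x) s)).
  { pose proof (is_exp_Reals (mu * (1 - x))) as He. apply is_pseries_R in He.
    apply (@is_series_scal R_AbsRing R_NormedModule (exp (- mu) * (mu * x) ^ s / INR (fact s)))
      in He.
    replace (poisson (mu * x) s)
      with (exp (- mu) * (mu * x) ^ s / INR (fact s) * exp (mu * (1 - x))).
    - eapply is_series_ext; [|exact He]. intro m. cbv beta. rewrite Ha.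
      unfold scal; simpl; unfold mult; simpl. field. split; apply INR_fact_neq_0.
    - unfold poisson. replace (- (mu * x)) with (- mu + mu * (1 - x)) by ring.
      rewrite exp_plus. field. apply INR_fact_neq_0. }
  destruct s as [|s'].
  - eapply is_series_ext; [|exact Hsh]. reflexivity.
  - apply (is_series_decr_n a (S s')); [lia|].
    match goal with |- is_series _ ?L => replace L with (poisson (mu * x) (S s')) end;
      [exact Hsh|].
    rewrite sum_n_Reals, sum_eq_R0 by (intros; apply Hz; simpl in *; lia).
    unfold plus, opp; simpl. ring.
Qed.

Lemma analytic_at_conv_pow (P : R -> nat -> R) x0 :
  (forall j, analytic_at (fun x => P x j) x0) ->
  forall m t, analytic_at (fun x => conv_pow (P x) m t) x0.
Proof.
  intros HP m. induction m as [|m IH]; intro t.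
  - destruct t; [exact (analytic_at_const 1 x0)|exact (analytic_at_const 0 x0)].
  - apply (analytic_at_sumR (fun x a => conv_pow (P x) m a * P x (t - a)%nat)).
    intros i _. now apply analytic_at_mult.
Qed.

(** * The Markov kernel of [I_{A_C -> B}] *)

Section Kernel.

Variable l : nat.

Definition poisson_tail (lam : R) : R := 1 - sumR l (poisson lam).

(* The law of [[base - X]_0^top] for [X ~ Po(lam)], written as a finite sum:
   every [X >= l] gives the value [0] once [base <= l]. *)
Definition clamp_law (lam : R) (top base : Z) (v : nat) : R :=
  sumR l (fun s => poisson lam s * indZ (clampZ 0 top (base - Z.of_nat s)) (Z.of_nat v))
  + indZ 0 (Z.of_nat v) * poisson_tail lam.

Lemma Series_clamp_law lam top base v : (0 <= top)%Z -> (base <= Z.of_nat l)%Z ->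
  Series (fun s => poisson lam s * indZ (clampZ 0 top (base - Z.of_nat s)) (Z.of_nat v))
  = clamp_law lam top base v.
Proof.
  intros Htop Hbase. rewrite (Series_poisson_eventually_const lam _ l (indZ 0 (Z.of_nat v))).
  - unfold clamp_law, poisson_tail. ring.
  - intros s Hs. f_equal. unfold clampZ. lia.
Qed.

Lemma poisson_tail_ge0 lam : 0 <= lam -> 0 <= poisson_tail lam.
Proof. intro H. unfold poisson_tail. pose proof (sumR_poisson_le1 lam l H). lra. Qed.

Lemma poisson_tail_gt0 lam : 0 < lam -> 0 < poisson_tail lam.
Proof.
  intro H. unfold poisson_tail. pose proof (sumR_poisson_le1 lam (S l) ltac:(lra)).
  pose proof (poisson_gt0 lam l H). cbn [sumR] in *. lra.
Qed.

Lemma clamp_law_ge0 lam top base v : 0 <= lam -> 0 <= clamp_law lam top base v.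
Proof.
  intro H. unfold clamp_law. apply Rplus_le_le_0_compat.
  - apply sumR_ge0. intros. apply Rmult_le_pos; [now apply poisson_ge0|apply indZ_ge0].
  - apply Rmult_le_pos; [apply indZ_ge0|now apply poisson_tail_ge0].
Qed.

Lemma clamp_law_0 top base v : (1 <= l)%nat -> (0 <= top)%Z ->
  clamp_law 0 top base v = indZ (clampZ 0 top base) (Z.of_nat v).
Proof.
  intros Hl Htop. unfold clamp_law, poisson_tail.
  rewrite (sumR_ext l (poisson 0) (fun s => poisson 0 s * 1)) by (intros; ring).
  rewrite !sumR_poisson_at0 by lia. rewrite Z.sub_0_r. ring.
Qed.

Lemma sumR_clamp_law lam n top base : (0 <= top)%Z -> Z.of_nat n = (top + 1)%Z ->
  sumR n (clamp_law lam top base) = 1.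
Proof.
  intros Htop Hn. unfold clamp_law. rewrite sumR_plus, sumR_swap, sumR_scal_r.
  rewrite (sumR_ext l _ (poisson lam)).
  - rewrite sumR_indZ by lia. unfold poisson_tail. ring.
  - intros s _. rewrite sumR_scal_l, sumR_indZ by (unfold clampZ; lia). ring.
Qed.

Lemma clamp_law_above lam top base v : (0 <= top < Z.of_nat v)%Z ->
  clamp_law lam top base v = 0.
Proof.
  intros Hv. unfold clamp_law. rewrite sumR_eq0.
  - rewrite indZ_neq by lia. ring.
  - intros s _. rewrite indZ_neq by (unfold clampZ; lia). ring.
Qed.

(* From state [a] the chain moves to [[a - 1 + X]_0^(l-1)]. *)
Definition trans (lam : R) (a w : nat) : R :=
  clamp_law lam (Z.of_nat l - 1) (Z.of_nat l - Z.of_nat a) (l - 1 - w).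

Lemma trans_ge0 lam a w : 0 <= lam -> 0 <= trans lam a w.
Proof. apply clamp_law_ge0. Qed.

Lemma sumR_trans lam a : (1 <= l)%nat -> sumR l (trans lam a) = 1.
Proof.
  intro Hl. unfold trans. rewrite (sumR_rev l (clamp_law lam _ _)). apply sumR_clamp_law; lia.
Qed.

Lemma trans_below lam a w : (w < l - 1)%nat -> (w + 1 < a)%nat -> trans lam a w = 0.
Proof.
  intros Hw Ha. unfold trans, clamp_law. rewrite sumR_eq0.
  - rewrite indZ_neq by lia. ring.
  - intros s _. rewrite indZ_neq by (unfold clampZ; lia). ring.
Qed.

Lemma trans_subdiag lam w : (w < l - 1)%nat -> trans lam (S w) w = exp (- lam).
Proof.
  intros Hw. unfold trans, clamp_law. rewrite (indZ_neq 0) by lia. rewrite Rmult_0_l, Rplus_0_r.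
  rewrite (sumR_single l _ O) by
    (try lia; intros i Hi Hne; rewrite indZ_neq by (unfold clampZ; lia); ring).
  rewrite indZ_eq, poisson_O by (unfold clampZ; lia). ring.
Qed.

(* The kernel is upper Hessenberg: only [a <= w + 1] reaches [w], and [w + 1] does so
   with the positive weight [exp (- lam)]. *)
Lemma sumR_trans_hessenberg lam (f : nat -> R) w : (w < l - 1)%nat ->
  sumR l (fun a => f a * trans lam a w)
  = sumR (S w) (fun a => f a * trans lam a w) + f (S w) * exp (- lam).
Proof.
  intro Hw. rewrite (sumR_trunc l (S (S w))) by (try lia; intros; rewrite trans_below by lia; ring).
  cbn [sumR]. rewrite trans_subdiag by exact Hw. reflexivity.
Qed.

(* The balance equation at [w], solved for the mass of [w + 1]. *)
Definition stat_weight (lam : R) : nat -> R :=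
  cov_rec 1 (fun w h => exp lam * (h w - sumR (S w) (fun a => h a * trans lam a w))).

Lemma stat_weight_O lam : stat_weight lam O = 1.
Proof. reflexivity. Qed.

Lemma stat_weight_S lam w : stat_weight lam (S w)
  = exp lam * (stat_weight lam w - sumR (S w) (fun a => stat_weight lam a * trans lam a w)).
Proof.
  unfold stat_weight. rewrite cov_rec_S; [reflexivity|].
  intros f g H. rewrite H by lia. do 2 f_equal.
  apply sumR_ext. intros. rewrite H by lia. reflexivity.
Qed.

Lemma stat_weight_balance lam w : stat_weight lam (S w) * exp (- lam)
  = stat_weight lam w - sumR (S w) (fun a => stat_weight lam a * trans lam a w).
Proof.
  rewrite stat_weight_S, Rmult_comm, <- Rmult_assoc, <- exp_plus, Rplus_opp_l, exp_0. ring.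
Qed.

Lemma stat_weight_stationary lam w : (w < l - 1)%nat ->
  sumR l (fun a => stat_weight lam a * trans lam a w) = stat_weight lam w.
Proof. intro Hw. rewrite sumR_trans_hessenberg, stat_weight_balance by exact Hw. ring. Qed.

Lemma stationary_unique lam (p : nat -> R) :
  (forall w, (w < l - 1)%nat -> p w = sumR l (fun a => p a * trans lam a w)) ->
  forall w, (w < l)%nat -> p w = p O * stat_weight lam w.
Proof.
  intros Hs w. induction w as [|w IH] using Nat.strong_induction_le; intro Hw.
  { rewrite stat_weight_O. ring. }
  pose proof (Hs w ltac:(lia)) as E. rewrite sumR_trans_hessenberg in E by lia.
  rewrite (sumR_ext (S w) _ (fun a => p O * (stat_weight lam a * trans lam a w))) in E
    by (intros; rewrite IH by lia; ring).
  rewrite sumR_scal_l, (IH w) in E by lia.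
  pose proof (stat_weight_balance lam w) as Hbal. pose proof (exp_pos (- lam)).
  apply (Rmult_eq_reg_r (exp (- lam))); [|lra].
  rewrite Rmult_assoc, Hbal. lra.
Qed.

(* Flow balance across the cut between [{0..w}] and [{w+1..l-1}]: the only way down
   is [w + 1 -> w]. *)
Lemma stat_weight_cut lam w : (S w < l)%nat ->
  stat_weight lam (S w) * exp (- lam)
  = sumR (S w) (fun a => stat_weight lam a * (1 - sumR (S w) (trans lam a))).
Proof.
  induction w as [|w IH]; intro Hw.
  - rewrite stat_weight_balance. cbn [sumR]. ring.
  - rewrite stat_weight_balance.
    rewrite (sumR_ext (S (S w)) (fun a => stat_weight lam a * (1 - sumR (S (S w)) (trans lam a)))
                      (fun a => stat_weight lam a * (1 - sumR (S w) (trans lam a))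
                                          - stat_weight lam a * trans lam a (S w)))
      by (intros; cbn [sumR]; ring).
    rewrite sumR_minus.
    assert (Hdiag : sumR (S w) (trans lam (S w)) = exp (- lam)).
    { cbn [sumR]. rewrite sumR_eq0 by (intros; apply trans_below; lia).
      rewrite trans_subdiag by lia. ring. }
    set (G := fun a => stat_weight lam a * (1 - sumR (S w) (trans lam a))) in *.
    change (sumR (S (S w)) G) with (sumR (S w) G + G (S w)).
    rewrite <- IH by lia. unfold G. rewrite Hdiag. ring.
Qed.

Lemma stat_weight_ge0 lam w : 0 <= lam -> (w < l)%nat -> 0 <= stat_weight lam w.
Proof.
  intro Hlam. induction w as [|w IH] using Nat.strong_induction_le; intro Hw.
  { rewrite stat_weight_O. lra. }
  pose proof (exp_pos (- lam)).
  apply Rmult_le_reg_r with (exp (- lam)); [lra|]. rewrite Rmult_0_l, stat_weight_cut by exact Hw.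
  apply sumR_ge0. intros a Ha. apply Rmult_le_pos; [apply IH; lia|].
  pose proof (sumR_le_trunc l (S w) (trans lam a) ltac:(lia) (fun j _ => trans_ge0 lam a j Hlam))
    as Hle.
  rewrite sumR_trans in Hle by lia. lra.
Qed.

Definition stat_mass (lam : R) : R := sumR l (stat_weight lam).

Lemma stat_mass_ge1 lam : (1 <= l)%nat -> 0 <= lam -> 1 <= stat_mass lam.
Proof.
  intros Hl Hlam. unfold stat_mass. rewrite <- (stat_weight_O lam) at 1.
  apply sumR_ge_term; [|lia]. intros. now apply stat_weight_ge0.
Qed.

Definition stat_law (lam : R) (a : nat) : R :=
  if (a <? l)%nat then stat_weight lam a / stat_mass lam else 0.

Lemma stat_law_lt lam a : (a < l)%nat -> stat_law lam a = stat_weight lam a / stat_mass lam.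
Proof. intro H. unfold stat_law. now destruct (Nat.ltb_spec a l); [|lia]. Qed.

Lemma stat_law_ge lam a : (l <= a)%nat -> stat_law lam a = 0.
Proof. intro H. unfold stat_law. now destruct (Nat.ltb_spec a l); [lia|]. Qed.

Lemma sumR_stat_law lam : (1 <= l)%nat -> 0 <= lam -> sumR l (stat_law lam) = 1.
Proof.
  intros Hl Hlam. pose proof (stat_mass_ge1 lam Hl Hlam).
  rewrite (sumR_ext l _ (fun a => stat_weight lam a * / stat_mass lam))
    by (intros; now apply stat_law_lt).
  rewrite sumR_scal_r. fold (stat_mass lam). field. lra.
Qed.

Lemma stat_law_pmf lam : (1 <= l)%nat -> 0 <= lam -> is_pmf l (stat_law lam).
Proof.
  intros Hl Hlam. split; [|split].
  - intro a. unfold stat_law. destruct (Nat.ltb_spec a l); [|lra].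
    pose proof (stat_mass_ge1 lam Hl Hlam).
    apply Rdiv_le_0_compat; [now apply stat_weight_ge0|lra].
  - intros; now apply stat_law_ge.
  - now apply sumR_stat_law.
Qed.

(* The last equation, [w = l - 1], follows from the others because [trans] is stochastic. *)
Lemma stat_law_stationary lam w : (w < l)%nat ->
  stat_law lam w = sumR l (fun a => stat_law lam a * trans lam a w).
Proof.
  intros Hw.
  assert (Hlow : forall w, (w < l - 1)%nat ->
            stat_law lam w = sumR l (fun a => stat_law lam a * trans lam a w)).
  { intros w' Hw'.
    rewrite (sumR_ext l _ (fun a => / stat_mass lam * (stat_weight lam a * trans lam a w')))
      by (intros; rewrite stat_law_lt by lia; unfold Rdiv; ring).
    rewrite sumR_scal_l, stat_weight_stationary, stat_law_lt by lia. unfold Rdiv. ring. }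
  destruct (Nat.ltb_spec w (l - 1)) as [Hw'|Hw']; [now apply Hlow|].
  replace w with (l - 1)%nat by lia.
  assert (Hsplit : forall f : nat -> R, sumR l f = sumR (l - 1) f + f (l - 1)%nat)
    by (intro f; replace l with (S (l - 1)) at 1 by lia; reflexivity).
  assert (Hlast : forall a, trans lam a (l - 1) = 1 - sumR (l - 1) (trans lam a))
    by (intro a; pose proof (sumR_trans lam a ltac:(lia)) as S1; rewrite Hsplit in S1; lra).
  rewrite (sumR_ext l _
             (fun a => stat_law lam a - sumR (l - 1) (fun w => stat_law lam a * trans lam a w)))
    by (intros; rewrite Hlast, sumR_scal_l; ring).
  rewrite sumR_minus, sumR_swap, (sumR_ext (l - 1) _ (stat_law lam))
    by (intros; symmetry; apply Hlow; lia).
  rewrite (Hsplit (stat_law lam)). ring.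
Qed.

Lemma stat_weight_at0 w : (2 <= l)%nat -> (1 <= w)%nat -> stat_weight 0 w = 0.
Proof.
  intro Hl. induction w as [|w IH] using Nat.strong_induction_le; intro Hw; [lia|].
  assert (Htrans0 : forall a, trans 0 a w
            = indZ (clampZ 0 (Z.of_nat l - 1) (Z.of_nat l - Z.of_nat a)) (Z.of_nat (l - 1 - w)))
    by (intro; apply clamp_law_0; lia).
  rewrite stat_weight_S, exp_0.
  rewrite (sumR_single (S w) _ O) by (try lia; intros i Hi Hne; rewrite (IH i) by lia; ring).
  rewrite stat_weight_O, Htrans0. destruct w as [|w].
  - rewrite indZ_eq by (unfold clampZ; lia). cbn [sumR]. rewrite stat_weight_O. ring.
  - rewrite indZ_neq, (IH (S w)) by (unfold clampZ; lia). ring.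
Qed.

Lemma stat_mass_at0 : (2 <= l)%nat -> stat_mass 0 = 1.
Proof.
  intro Hl. unfold stat_mass.
  rewrite (sumR_single l _ O) by (try lia; intros; apply stat_weight_at0; lia).
  apply stat_weight_O.
Qed.

Lemma stat_law_unique lam p : (1 <= l)%nat -> 0 <= lam -> is_pmf l p ->
  (forall w, (w < l)%nat -> p w = sumR l (fun a => p a * trans lam a w)) -> p = stat_law lam.
Proof.
  intros Hl Hlam (_ & Hp_ge & Hp_sum) Hs.
  assert (Hp : forall w, (w < l)%nat -> p w = p O * stat_weight lam w)
    by (apply stationary_unique; intros; apply Hs; lia).
  assert (Hp0 : p O * stat_mass lam = 1).
  { rewrite <- Hp_sum. unfold stat_mass. rewrite <- sumR_scal_l.
    symmetry. now apply sumR_ext. }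
  pose proof (stat_mass_ge1 lam Hl Hlam).
  apply functional_extensionality. intro a. destruct (Nat.ltb_spec a l).
  - rewrite Hp, stat_law_lt by assumption.
    replace (p O) with (/ stat_mass lam)
      by (apply (Rmult_eq_reg_r (stat_mass lam)); [rewrite Rinv_l|]; lra).
    unfold Rdiv. ring.
  - now rewrite Hp_ge, stat_law_ge.
Qed.

Lemma stat_law_at0 a : (2 <= l)%nat -> stat_law 0 a = if (a =? 0)%nat then 1 else 0.
Proof.
  intro Hl. destruct (Nat.ltb_spec a l).
  - rewrite stat_law_lt, stat_mass_at0 by assumption.
    destruct a; [rewrite stat_weight_O|rewrite stat_weight_at0 by lia]; simpl; field.
  - rewrite stat_law_ge by assumption. destruct a; [lia|reflexivity].
Qed.

End Kernel.

(** * Reduction of the relaxed system *)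

Definition law_BAC (l : nat) (lam : R) (p : nat -> R) (v : nat) : R :=
  sumR l (fun a => p a * clamp_law l lam (Z.of_nat l - 1) (Z.of_nat l - Z.of_nat a) v).

Definition law_BAR (l : nat) (lam : R) (p : nat -> R) (v : nat) : R :=
  sumR l (fun a1 => sumR l (fun a2 => p a1 * p a2 *
    clamp_law l lam 1 (Z.of_nat l - Z.of_nat a1 - Z.of_nat a2) v)).

Definition law_ARB (k : nat) (p : nat -> R) (v : nat) : R :=
  sumR k (fun t => conv_pow p (k - 1) t * indZ (Z.max 0 (1 - Z.of_nat t)) (Z.of_nat v)).

Lemma Series_compound_poisson_clamp l mu p top base v : is_pmf 2 p ->
  (0 <= top)%Z -> (base <= Z.of_nat l)%Z ->
  Series (fun s => compound_poisson mu p s * indZ (clampZ 0 top (base - Z.of_nat s)) (Z.of_nat v))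
  = clamp_law l (mu * p 1%nat) top base v.
Proof.
  intros Hp Htop Hbase. rewrite compound_poisson_bernoulli by exact Hp. now apply Series_clamp_law.
Qed.

(* Once [I_{A_R -> B}] is known to be Bernoulli, the Poisson sums in (3) and (4) have
   parameter [lam = k c Pr[I_{A_R -> B} = 1]], and only finite sums remain. *)
Lemma relaxed_solution_iff k l rho c : (1 <= l)%nat ->
  relaxed_solution k l rho c <->
  let lam := INR k * c * pARB rho 1%nat in
  0 < c /\ is_pmf l (pACB rho) /\ is_pmf l (pBAC rho) /\
  is_pmf 2 (pARB rho) /\ is_pmf 2 (pBAR rho) /\
  (forall v, pACB rho v =
     sumR l (fun b => pBAC rho b * indZ (Z.of_nat l - 1 - Z.of_nat b) (Z.of_nat v))) /\
  pARB rho = law_ARB k (pBAR rho) /\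
  pBAC rho = law_BAC l lam (pACB rho) /\
  pBAR rho = law_BAR l lam (pACB rho).
Proof.
  intro Hl. unfold relaxed_solution. cbv zeta. split.
  - intros (Hc & HA & HB & HR & HBR & E1 & E2 & E3 & E4).
    do 6 (split; [assumption|]).
    split; [|split]; apply functional_extensionality; intro v; [apply E2|rewrite E3|rewrite E4];
      repeat (apply sumR_ext; intros);
      rewrite (Series_compound_poisson_clamp l) by (auto; lia); reflexivity.
  - intros (Hc & HA & HB & HR & HBR & E1 & E2 & E3 & E4).
    do 6 (split; [assumption|]).
    split; [|split]; intro v; [now rewrite E2|rewrite E3|rewrite E4];
      repeat (apply sumR_ext; intros);
      rewrite (Series_compound_poisson_clamp l) by (auto; lia); reflexivity.
Qed.

Lemma sumR_reflect_lt l p v : (v < l)%nat ->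
  sumR l (fun b => p b * indZ (Z.of_nat l - 1 - Z.of_nat b) (Z.of_nat v)) = p (l - 1 - v)%nat.
Proof.
  intro Hv. rewrite (sumR_single l _ (l - 1 - v)) by
    (try lia; intros i Hi Hne; rewrite indZ_neq by lia; ring).
  rewrite indZ_eq by lia. ring.
Qed.

Lemma sumR_reflect_ge l p v : (l <= v)%nat ->
  sumR l (fun b => p b * indZ (Z.of_nat l - 1 - Z.of_nat b) (Z.of_nat v)) = 0.
Proof. intro Hv. apply sumR_eq0. intros. rewrite indZ_neq by lia. ring. Qed.

Lemma law_BAC_pmf l lam p : (1 <= l)%nat -> 0 <= lam -> is_pmf l p -> is_pmf l (law_BAC l lam p).
Proof.
  intros Hl Hlam (Hp_ge0 & _ & Hp_sum). split; [|split].
  - intro v. apply sumR_ge0. intros. apply Rmult_le_pos; [apply Hp_ge0|now apply clamp_law_ge0].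
  - intros v Hv. apply sumR_eq0. intros. rewrite clamp_law_above by lia. ring.
  - unfold law_BAC. rewrite sumR_swap, <- Hp_sum. apply sumR_ext. intros.
    rewrite sumR_scal_l, sumR_clamp_law by lia. ring.
Qed.

Lemma law_BAR_pmf l lam p : 0 <= lam -> is_pmf l p -> is_pmf 2 (law_BAR l lam p).
Proof.
  intros Hlam (Hp_ge0 & _ & Hp_sum). split; [|split].
  - intro v. do 2 (apply sumR_ge0; intros).
    apply Rmult_le_pos; [apply Rmult_le_pos; apply Hp_ge0|now apply clamp_law_ge0].
  - intros v Hv. do 2 (apply sumR_eq0; intros). rewrite clamp_law_above by lia. ring.
  - unfold law_BAR. rewrite sumR_swap, <- Hp_sum. apply sumR_ext. intros a1 _.
    rewrite sumR_swap, (sumR_ext l _ (fun a2 => p a1 * p a2))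
      by (intros; rewrite sumR_scal_l, sumR_clamp_law by lia; ring).
    rewrite sumR_scal_l, Hp_sum. ring.
Qed.

Lemma law_ARB_pmf k p : (1 <= k)%nat -> is_pmf 2 p -> is_pmf 2 (law_ARB k p).
Proof.
  intros Hk Hp. destruct (is_pmf2_split p Hp) as [Hp0 Hp2]. destruct Hp as (Hp_ge0 & _ & _).
  split; [|split].
  - intro v. apply sumR_ge0. intros.
    apply Rmult_le_pos; [now apply conv_pow_ge0|apply indZ_ge0].
  - intros v Hv. apply sumR_eq0. intros. rewrite indZ_neq by lia. ring.
  - cbn [sumR]. unfold law_ARB. rewrite Rplus_0_l, <- sumR_plus.
    replace k with (S (k - 1)) at 1 by lia.
    rewrite <- (sumR_conv_pow_bernoulli p (p 1%nat) Hp0 eq_refl Hp2 (k - 1)).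
    apply sumR_ext. intros t _. rewrite <- Rmult_plus_distr_l.
    destruct (Z.eq_dec (Z.max 0 (1 - Z.of_nat t)) 0) as [E|E];
      [rewrite (indZ_eq _ 0), (indZ_neq _ 1) by lia|rewrite (indZ_neq _ 0), (indZ_eq _ 1) by lia];
      ring.
Qed.

Lemma law_ARB_1 k p : (1 <= k)%nat -> law_ARB k p 1%nat = p O ^ (k - 1).
Proof.
  intro Hk. unfold law_ARB.
  rewrite (sumR_single k _ O) by (try lia; intros i Hi Hne; rewrite indZ_neq by lia; ring).
  rewrite conv_pow_O, indZ_eq by reflexivity. ring.
Qed.

Lemma law_BAR_O_gt0 l lam p : (1 <= l)%nat -> 0 < lam -> is_pmf l p -> 0 < p O ->
  0 < law_BAR l lam p O.
Proof.
  intros Hl Hlam (Hp_ge0 & _ & _) Hp0.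
  assert (Hterm_ge0 : forall a1 a2, 0 <= p a1 * p a2 *
            clamp_law l lam 1 (Z.of_nat l - Z.of_nat a1 - Z.of_nat a2) O)
    by (intros; apply Rmult_le_pos; [apply Rmult_le_pos; apply Hp_ge0|apply clamp_law_ge0; lra]).
  assert (Hclamp : 0 < clamp_law l lam 1 (Z.of_nat l) O).
  { unfold clamp_law. rewrite indZ_eq by reflexivity.
    pose proof (poisson_tail_gt0 l lam Hlam).
    enough (0 <= sumR l (fun s => poisson lam s *
              indZ (clampZ 0 1 (Z.of_nat l - Z.of_nat s)) (Z.of_nat 0))) by lra.
    apply sumR_ge0. intros. apply Rmult_le_pos; [apply poisson_ge0; lra|apply indZ_ge0]. }
  unfold law_BAR.
  eapply Rlt_le_trans; [|apply (sumR_ge_term l _ O); [|lia]].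
  - eapply Rlt_le_trans; [|apply (sumR_ge_term l _ O); [|lia]].
    + rewrite !Z.sub_0_r. apply Rmult_lt_0_compat; [apply Rmult_lt_0_compat|]; assumption.
    + intros. apply Hterm_ge0.
  - intros. apply sumR_ge0. intros. apply Hterm_ge0.
Qed.

(** * The parametrisation by [lam] *)

Definition bar_at (l : nat) (lam : R) : nat -> R := law_BAR l lam (stat_law l lam).

Definition q_at (k l : nat) (lam : R) : R := law_ARB k (bar_at l lam) 1%nat.

Definition solution_at (k l : nat) (lam : R) : Dist4 * R :=
  (mkDist4 (stat_law l lam) (law_BAC l lam (stat_law l lam))
     (law_ARB k (bar_at l lam)) (bar_at l lam),
   lam / (INR k * q_at k l lam)).

Lemma q_at_gt0 k l lam : (1 <= k)%nat -> (1 <= l)%nat -> 0 < lam -> 0 < q_at k l lam.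
Proof.
  intros Hk Hl Hlam. unfold q_at. rewrite law_ARB_1 by exact Hk.
  apply pow_lt, law_BAR_O_gt0; [exact Hl|exact Hlam|apply stat_law_pmf; [exact Hl|lra]|].
  pose proof (stat_mass_ge1 l lam Hl ltac:(lra)).
  rewrite stat_law_lt, stat_weight_O by lia. apply Rdiv_lt_0_compat; lra.
Qed.

Lemma solution_at_scale k l lam : (1 <= k)%nat -> (1 <= l)%nat -> 0 < lam ->
  INR k * snd (solution_at k l lam) * pARB (fst (solution_at k l lam)) 1%nat = lam.
Proof.
  intros Hk Hl Hlam. pose proof (q_at_gt0 k l lam Hk Hl Hlam).
  assert (0 < INR k) by (apply lt_0_INR; lia).
  cbn [solution_at fst snd pARB]. fold (q_at k l lam). field. split; lra.
Qed.

Lemma solution_at_solves k l lam : (1 <= k)%nat -> (1 <= l)%nat -> 0 < lam ->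
  relaxed_solution k l (fst (solution_at k l lam)) (snd (solution_at k l lam)).
Proof.
  intros Hk Hl Hlam. apply relaxed_solution_iff; [exact Hl|]. cbv zeta.
  rewrite solution_at_scale by assumption.
  pose proof (stat_law_pmf l lam Hl ltac:(lra)) as Hpi.
  pose proof (law_BAR_pmf l lam _ ltac:(lra) Hpi) as Hbar.
  cbn [solution_at fst snd pACB pBAC pARB pBAR].
  split; [pose proof (q_at_gt0 k l lam Hk Hl Hlam);
          apply Rdiv_lt_0_compat; [lra|apply Rmult_lt_0_compat; [apply lt_0_INR; lia|lra]]|].
  split; [exact Hpi|]. split; [apply law_BAC_pmf; [exact Hl|lra|exact Hpi]|].
  split; [now apply law_ARB_pmf|]. split; [exact Hbar|].
  split; [|easy]. intro v. destruct (Nat.ltb_spec v l).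
  - rewrite sumR_reflect_lt by assumption. apply stat_law_stationary. assumption.
  - rewrite sumR_reflect_ge, stat_law_ge by assumption. reflexivity.
Qed.

Lemma solution_at_nontrivial k l lam : (1 <= k)%nat -> (1 <= l)%nat -> 0 < lam ->
  ~ trivial_solution l (fst (solution_at k l lam)).
Proof.
  intros Hk Hl Hlam (_ & Hr0 & _). cbn [solution_at fst pARB] in Hr0.
  assert (Hpmf : is_pmf 2 (law_ARB k (bar_at l lam))).
  { apply law_ARB_pmf; [exact Hk|]. apply law_BAR_pmf; [lra|]. apply stat_law_pmf; [exact Hl|lra]. }
  destruct (is_pmf2_split _ Hpmf) as [Hp0 _]. pose proof (q_at_gt0 k l lam Hk Hl Hlam).
  unfold q_at in *. lra.
Qed.

Lemma solution_at_inj k l lam1 lam2 : (1 <= k)%nat -> (1 <= l)%nat -> 0 < lam1 -> 0 < lam2 ->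
  solution_at k l lam1 = solution_at k l lam2 -> lam1 = lam2.
Proof.
  intros Hk Hl Hlam1 Hlam2 E.
  now rewrite <- (solution_at_scale k l lam1), <- (solution_at_scale k l lam2), E.
Qed.

Lemma trivial_solution_at0 l rho : (2 <= l)%nat -> is_pmf 2 (pARB rho) -> pARB rho 1%nat = 0 ->
  pACB rho = stat_law l 0 -> pBAC rho = law_BAC l 0 (pACB rho) ->
  pBAR rho = law_BAR l 0 (pACB rho) ->
  trivial_solution l rho.
Proof.
  intros Hl HR Hq EA EB EBR.
  assert (Hpi : forall a, (a < l)%nat -> a <> O -> stat_law l 0 a = 0)
    by (intros a Ha Hne; rewrite stat_law_at0 by lia; now destruct a).
  assert (Hpi0 : stat_law l 0 O = 1) by (now rewrite stat_law_at0).
  destruct (is_pmf2_split _ HR) as [Hr0 _].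
  split; [now rewrite EA|]. split; [lra|]. split.
  - rewrite EB, EA. unfold law_BAC.
    rewrite (sumR_single l _ O), Hpi0, clamp_law_0
      by (try lia; intros i Hi Hne; rewrite Hpi by lia; ring).
    rewrite indZ_eq by (unfold clampZ; lia). ring.
  - rewrite EBR, EA. unfold law_BAR.
    rewrite (sumR_single l _ O)
      by (try lia; intros i Hi Hne; apply sumR_eq0; intros; rewrite (Hpi i) by lia; ring).
    rewrite (sumR_single l _ O) by (try lia; intros i Hi Hne; rewrite (Hpi i) by lia; ring).
    rewrite Hpi0, clamp_law_0, indZ_eq by (unfold clampZ; lia). ring.
Qed.

Lemma solution_at_onto k l rho c : (1 <= k)%nat -> (2 <= l)%nat ->
  relaxed_solution k l rho c -> ~ trivial_solution l rho ->
  exists lam, 0 < lam /\ solution_at k l lam = (rho, c).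
Proof.
  intros Hk Hl Hsol Hnt. apply relaxed_solution_iff in Hsol; [|lia]. cbv zeta in Hsol.
  destruct Hsol as (Hc & HA & HB & HR & HBR & E1 & E2 & E3 & E4).
  set (q := pARB rho 1%nat) in *. set (lam := INR k * c * q) in *.
  assert (Hlam : 0 <= lam).
  { destruct HR as (HR_ge0 & _). pose proof (HR_ge0 1%nat). pose proof (pos_INR k).
    unfold lam, q. apply Rmult_le_pos; [apply Rmult_le_pos|]; lra. }
  assert (EA : pACB rho = stat_law l lam).
  { apply stat_law_unique; [lia|exact Hlam|exact HA|]. intros w Hw.
    rewrite E1, sumR_reflect_lt, E3 by exact Hw. reflexivity. }
  destruct (Rle_lt_or_eq_dec 0 lam Hlam) as [Hpos|Hzero].
  - exists lam. split; [exact Hpos|].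
    assert (Hq : q <> 0) by (intro Z; unfold lam in Hpos; rewrite Z in Hpos; lra).
    destruct rho as [pa pb pr pbr]. cbn [pACB pBAC pARB pBAR] in *. subst pa.
    unfold solution_at, q_at, bar_at. rewrite <- E4, <- E2, <- E3. fold q.
    f_equal. unfold lam. field. split; [exact Hq|]. apply not_0_INR. lia.
  - exfalso. apply Hnt. rewrite <- Hzero in EA, E3, E4.
    apply trivial_solution_at0; try assumption.
    assert (0 < INR k * c) by (apply Rmult_lt_0_compat; [apply lt_0_INR; lia|exact Hc]).
    unfold lam in Hzero. destruct (Rmult_integral _ _ (eq_sym Hzero)); [lra|assumption].
Qed.

(** * Analyticity in [lam] *)

Lemma analytic_at_clamp_law l top base v x0 :
  analytic_at (fun lam => clamp_law l lam top base v) x0.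
Proof.
  apply analytic_at_plus.
  - apply analytic_at_sumR. intros.
    apply analytic_at_mult; [apply analytic_at_poisson|apply analytic_at_const].
  - apply analytic_at_mult; [apply analytic_at_const|].
    apply analytic_at_minus; [apply analytic_at_const|].
    apply analytic_at_sumR. intros. apply analytic_at_poisson.
Qed.

Lemma analytic_at_stat_weight l w x0 : analytic_at (fun lam => stat_weight l lam w) x0.
Proof.
  induction w as [|w IH] using Nat.strong_induction_le.
  - exact (analytic_at_const 1 x0).
  - apply (analytic_at_ext (fun lam => exp (1 * lam) *
      (stat_weight l lam w - sumR (S w) (fun a => stat_weight l lam a * trans l lam a w)))).
    { intro lam. now rewrite stat_weight_S, Rmult_1_l. }
    apply analytic_at_mult; [apply analytic_at_exp|].
    apply analytic_at_minus; [now apply IH|].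
    apply analytic_at_sumR. intros a Ha.
    apply analytic_at_mult; [apply IH; lia|apply analytic_at_clamp_law].
Qed.

Lemma analytic_at_stat_law l a x0 : (1 <= l)%nat -> 0 <= x0 ->
  analytic_at (fun lam => stat_law l lam a) x0.
Proof.
  intros Hl Hx0. unfold stat_law. destruct (Nat.ltb_spec a l); [|apply analytic_at_const].
  apply analytic_at_div; [apply analytic_at_stat_weight| |].
  - apply analytic_at_sumR. intros. apply analytic_at_stat_weight.
  - pose proof (stat_mass_ge1 l x0 Hl Hx0). unfold stat_mass in *. lra.
Qed.

Section AnalyticLaws.

Variables (P : R -> nat -> R) (x0 : R).
Hypothesis HP : forall a, analytic_at (fun lam => P lam a) x0.

Lemma analytic_at_law_BAC l v : analytic_at (fun lam => law_BAC l lam (P lam) v) x0.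
Proof.
  apply analytic_at_sumR. intros. apply analytic_at_mult; [apply HP|apply analytic_at_clamp_law].
Qed.

Lemma analytic_at_law_BAR l v : analytic_at (fun lam => law_BAR l lam (P lam) v) x0.
Proof.
  apply analytic_at_sumR. intros. apply analytic_at_sumR. intros.
  apply analytic_at_mult; [apply analytic_at_mult; apply HP|apply analytic_at_clamp_law].
Qed.

Lemma analytic_at_law_ARB k v : analytic_at (fun lam => law_ARB k (P lam) v) x0.
Proof.
  apply analytic_at_sumR. intros. apply analytic_at_mult; [|apply analytic_at_const].
  now apply analytic_at_conv_pow.
Qed.

End AnalyticLaws.

Lemma analytic_at_bar_at l v x0 : (1 <= l)%nat -> 0 <= x0 ->
  analytic_at (fun lam => bar_at l lam v) x0.
Proof.
  intros Hl Hx0. apply (analytic_at_law_BAR (stat_law l)). intro. now apply analytic_at_stat_law.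
Qed.

Lemma analytic_at_solution_at k l x0 : (1 <= k)%nat -> (2 <= l)%nat -> 0 < x0 ->
  analytic_at (fun lam => snd (solution_at k l lam)) x0 /\
  forall i, analytic_at (fun lam => pACB (fst (solution_at k l lam)) i) x0 /\
    analytic_at (fun lam => pBAC (fst (solution_at k l lam)) i) x0 /\
    analytic_at (fun lam => pARB (fst (solution_at k l lam)) i) x0 /\
    analytic_at (fun lam => pBAR (fst (solution_at k l lam)) i) x0.
Proof.
  intros Hk Hl Hx0. cbn [solution_at fst snd pACB pBAC pARB pBAR].
  assert (Hpi : forall a, analytic_at (fun lam => stat_law l lam a) x0)
    by (intro; apply analytic_at_stat_law; lia || lra).
  assert (Hbar : forall v, analytic_at (fun lam => bar_at l lam v) x0)
    by (intro; apply analytic_at_bar_at; lia || lra).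
  split; [|intro i; split; [|split; [|split]]].
  - apply analytic_at_div; [apply analytic_at_id| |].
    + apply analytic_at_mult; [apply analytic_at_const|now apply analytic_at_law_ARB].
    + pose proof (q_at_gt0 k l x0 Hk ltac:(lia) Hx0) as Hq.
      pose proof (Rmult_lt_0_compat _ _ (lt_0_INR k ltac:(lia)) Hq). lra.
  - apply Hpi.
  - now apply analytic_at_law_BAC.
  - now apply analytic_at_law_ARB.
  - apply Hbar.
Qed.

Theorem lemma7 (k l : nat) (hk : (2 <= k)%nat) (hl : (2 <= l)%nat) :
  exists F : R -> Dist4 * R,
    (* F maps (0,oo) into the non-trivial solutions *)
    (forall lam, 0 < lam ->
       relaxed_solution k l (fst (F lam)) (snd (F lam)) /\
       ~ trivial_solution l (fst (F lam))) /\
    (* injective on (0,oo) *)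
    (forall lam1 lam2, 0 < lam1 -> 0 < lam2 -> F lam1 = F lam2 -> lam1 = lam2) /\
    (* surjective onto the non-trivial solutions *)
    (forall (rho : Dist4) (c : R),
       relaxed_solution k l rho c -> ~ trivial_solution l rho ->
       exists lam, 0 < lam /\ F lam = (rho, c)) /\
    (* every component is real analytic in lambda *)
    analytic_on_pos (fun lam => snd (F lam)) /\
    (forall i : nat,
       analytic_on_pos (fun lam => pACB (fst (F lam)) i) /\
       analytic_on_pos (fun lam => pBAC (fst (F lam)) i) /\
       analytic_on_pos (fun lam => pARB (fst (F lam)) i) /\
       analytic_on_pos (fun lam => pBAR (fst (F lam)) i)).
Proof.
  assert (hk1 : (1 <= k)%nat) by lia. assert (hl1 : (1 <= l)%nat) by lia.
  pose proof (analytic_at_solution_at k l) as Han.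
  exists (solution_at k l). split; [|split; [|split; [|split]]].
  - intros lam Hlam. split.
    + now apply solution_at_solves.
    + now apply solution_at_nontrivial.
  - intros lam1 lam2. now apply solution_at_inj.
  - intros rho c. now apply solution_at_onto.
  - apply analytic_on_pos_of_at. intros x0 Hx0. exact (proj1 (Han x0 hk1 hl Hx0)).
  - intro i. repeat split; apply analytic_on_pos_of_at; intros x0 Hx0;
      destruct (proj2 (Han x0 hk1 hl Hx0) i) as (? & ? & ? & ?); assumption.
Qed.
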